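(* Let $T$ be a nondegenerate triangle in $\mathbb R^2$ whose vertices belong to $\mathbb Z^2$. Then for every $r\in\mathbb Z^2$, $r\neq0$, $$\sum_{i\in\mathbb Z^2}⨍_{(i,i+r)}\chi_T\,db=|T|.$$
   Context: A bond $(x_1,x_2)$ is the open segment $\{(1-\lambda)x_1+\lambda x_2:\lambda\in(0,1)\}$, and $⨍_{(x_1,x_2)}f\,db=\int_0^1f((1-\lambda)x_1+\lambda x_2)\,d\lambda$. For a polygonal set $\omega\subset\mathbb R^2$, $\chi_\omega(x)=\lim_{\rho\to0}\frac{|\omega\cap B_\rho(x)|}{|B_\rho(x)|}$, where $B_\rho(x)$ is the disc of radius $\rho$ centered at $x$; for a triangle $T$ this equals $1$ in the interior, $1/2$ on the relative interior of an edge, $\alpha/(2\pi)$ at a vertex with angle $\alpha$, and $0$ outside $\overline T$. $|T|$ is the area of $T$. *)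

From Stdlib Require Import Reals Lra ZArith List ClassicalEpsilon.
Open Scope R_scope.

Definition pt := (R * R)%type.

Definition ptZ (i : Z * Z) : pt := (IZR (fst i), IZR (snd i)).

Definition psub (x y : pt) : pt := (fst x - fst y, snd x - snd y).
Definition det2 (u v : pt) : R := fst u * snd v - snd u * fst v.
Definition dot2 (u v : pt) : R := fst u * fst v + snd u * snd v.
Definition norm2 (u : pt) : R := sqrt (dot2 u u).

Definition nondegenerate (a b c : pt) : Prop := det2 (psub b a) (psub c a) <> 0.

Definition tri_area (a b c : pt) : R := Rabs (det2 (psub b a) (psub c a)) / 2.

Definition vertex_angle (v p q : pt) : R :=
  acos (dot2 (psub p v) (psub q v) / (norm2 (psub p v) * norm2 (psub q v))).

Definition bary_b (a b c x : pt) : R :=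
  det2 (psub x a) (psub c a) / det2 (psub b a) (psub c a).
Definition bary_c (a b c x : pt) : R :=
  det2 (psub b a) (psub x a) / det2 (psub b a) (psub c a).
Definition bary_a (a b c x : pt) : R := 1 - bary_b a b c x - bary_c a b c x.

Definition decP (P : Prop) : bool :=
  if excluded_middle_informative P then true else false.

(* chi_T(x) = lim_{rho->0} |T ∩ B_rho(x)| / |B_rho(x)| for the triangle T = abc,
   written out as in the paper: 1 in the interior, 1/2 on the relative interior
   of an edge, alpha/(2 pi) at a vertex of angle alpha, 0 outside the closure. *)
Definition chi_tri (a b c : pt) (x : pt) : R :=
  if decP (x = a) then vertex_angle a b c / (2 * PI)
  else if decP (x = b) then vertex_angle b c a / (2 * PI)
  else if decP (x = c) then vertex_angle c a b / (2 * PI)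
  else
    let la := bary_a a b c x in
    let lb := bary_b a b c x in
    let lc := bary_c a b c x in
    if decP (0 < la /\ 0 < lb /\ 0 < lc) then 1
    else if decP (0 <= la /\ 0 <= lb /\ 0 <= lc) then 1 / 2
    else 0.

Definition bond_param (x1 x2 : pt) (f : pt -> R) (l : R) : R :=
  f ((1 - l) * fst x1 + l * fst x2, (1 - l) * snd x1 + l * snd x2).

(* ⨍_{(x1,x2)} f db = ∫_0^1 f((1-λ)x1+λx2) dλ  (Riemann integral; 0 if not integrable) *)
Definition bond_avg (f : pt -> R) (x1 x2 : pt) : R :=
  match excluded_middle_informative (inhabited (Riemann_integrable (bond_param x1 x2 f) 0 1)) with
  | left h => RiemannInt (epsilon h (fun _ => True))
  | right _ => 0
  end.

Fixpoint sum_list (t : Z * Z -> R) (F : list (Z * Z)) : R :=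
  match F with nil => 0 | i :: F' => t i + sum_list t F' end.

(* unconditional convergence of sum_{i in Z^2} t i to s *)
Definition sumZ2 (t : Z * Z -> R) (s : R) : Prop :=
  forall eps, 0 < eps -> exists F0 : list (Z * Z),
    forall F : list (Z * Z), NoDup F -> incl F0 F -> Rabs (sum_list t F - s) < eps.

From Stdlib Require Import Reals Lra Lia ZArith List Permutation FunctionalExtensionality ClassicalEpsilon Znumtheory.
Open Scope R_scope.

(* A unimodular change of lattice coordinates maps r to (g, 0) with g > 0 and the triangle to
   another lattice triangle of the same area, so all bonds may be taken horizontal. On the row
   at integer height n, chi_T is a step function equal to c on an interval (u, v) (c = 1 for a
   chord, c = 1/2 along an edge), so the average over the bond from m to m + g is
   c (clip(m + g) - clip(m)) / g with clip the projection onto [u, v]; summing over m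
   telescopes to the weighted length c (v - u) of the row. This length is a tent function of n,
   affine between the heights of the vertices, and the trapezoid rule with integer nodes is
   exact for it, which yields the area. *)

Definition clip (u v s : R) : R := Rmin (Rmax s u) v.

Definition bump (u v c t : R) : R :=
  if Rlt_dec u t then if Rlt_dec t v then c else 0 else 0.

Lemma adapted_couple_const (h : R -> R) a b c :
  a <= b -> (forall x, a < x < b -> h x = c) ->
  adapted_couple h a b (a :: b :: nil) (c :: nil).
Proof.
  intros Hab Hh; unfold adapted_couple; repeat split.
  - intros i Hi; simpl in Hi; inversion Hi; [simpl; assumption | lia].
  - simpl; unfold Rmin; destruct (Rle_dec a b); lra.
  - simpl; unfold Rmax; destruct (Rle_dec a b); lra.
  - intros i Hi x Hx; destruct i as [|i]; [apply Hh, Hx | simpl in Hi; lia].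
Qed.

Lemma RiemannInt_const_open (h : R -> R) a b c :
  a <= b -> (forall x, a < x < b -> h x = c) ->
  { pr : Riemann_integrable h a b | RiemannInt pr = c * (b - a) }.
Proof.
  intros Hab Hh.
  assert (pr : Riemann_integrable h a b).
  { intro eps.
    assert (Hs : IsStepFun h a b).
    { exists (a :: b :: nil), (c :: nil). apply adapted_couple_const; auto. }
    exists (mkStepFun Hs), (mkStepFun (StepFun_P4 a b 0)). split.
    - intros t _. simpl. unfold fct_cte. rewrite Rminus_diag, Rabs_R0. lra.
    - rewrite StepFun_P18, Rmult_0_l, Rabs_R0. apply cond_pos. }
  exists pr.
  rewrite (RiemannInt_P18 pr (RiemannInt_P14 a b c) Hab).
  - apply RiemannInt_P15.
  - intros; unfold fct_cte; auto.
Qed.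

Lemma RiemannInt_three_pieces (h : R -> R) u v c :
  0 <= u -> u <= v -> v <= 1 ->
  (forall x, 0 < x < u -> h x = 0) -> (forall x, u < x < v -> h x = c) ->
  (forall x, v < x < 1 -> h x = 0) ->
  { pr : Riemann_integrable h 0 1 | RiemannInt pr = c * (v - u) }.
Proof.
  intros H0 H1 H2 Ha Hb Hc.
  destruct (RiemannInt_const_open h 0 u 0 H0 Ha) as [p1 E1].
  destruct (RiemannInt_const_open h u v c H1 Hb) as [p2 E2].
  destruct (RiemannInt_const_open h v 1 0 H2 Hc) as [p3 E3].
  pose (p12 := RiemannInt_P24 p1 p2).
  exists (RiemannInt_P24 p12 p3).
  rewrite <- (RiemannInt_P26 p12 p3), <- (RiemannInt_P26 p1 p2 p12). lra.
Qed.

Lemma RiemannInt_bump (h : R -> R) u v c : u <= v ->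
  (forall x, x <> u -> x <> v -> h x = bump u v c x) ->
  { pr : Riemann_integrable h 0 1 | RiemannInt pr = c * (clip 0 1 v - clip 0 1 u) }.
Proof.
  intros Huv Hh. unfold clip, bump in *.
  apply RiemannInt_three_pieces;
    try (unfold Rmin, Rmax; repeat destruct Rle_dec; lra);
    intros x Hx; rewrite Hh;
    unfold Rmin, Rmax in *; repeat destruct Rle_dec; repeat destruct Rlt_dec; lra.
Qed.

Definition average01 (h : R -> R) : R :=
  match excluded_middle_informative (inhabited (Riemann_integrable h 0 1)) with
  | left H => RiemannInt (epsilon H (fun _ => True))
  | right _ => 0
  end.

Lemma average01_RiemannInt h (pr : Riemann_integrable h 0 1) : average01 h = RiemannInt pr.
Proof.
  unfold average01. destruct excluded_middle_informative as [H|H].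
  - apply RiemannInt_P5.
  - exfalso; apply H; constructor; auto.
Qed.

Lemma bond_avg_average01 f x1 x2 : bond_avg f x1 x2 = average01 (bond_param x1 x2 f).
Proof. reflexivity. Qed.

Lemma Rlt_shift_scale m g a b : 0 < g -> (a - m) / g < (b - m) / g <-> a < b.
Proof.
  intros Hg. split; intros H.
  - apply Rmult_lt_compat_r with (r := g) in H; [|lra].
    unfold Rdiv in H. rewrite !Rmult_assoc, Rinv_l, !Rmult_1_r in H; lra.
  - unfold Rdiv. apply Rmult_lt_compat_r; [apply Rinv_0_lt_compat|]; lra.
Qed.

Lemma bump_shift_scale u v c m g y : 0 < g ->
  bump u v c y = bump ((u - m) / g) ((v - m) / g) c ((y - m) / g).
Proof.
  intros Hg. unfold bump.
  destruct (Rlt_dec u y) as [H1|H1]; destruct (Rlt_dec ((u - m) / g) ((y - m) / g)) as [H2|H2];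
  destruct (Rlt_dec y v) as [H3|H3]; destruct (Rlt_dec ((y - m) / g) ((v - m) / g)) as [H4|H4];
  rewrite ?Rlt_shift_scale in * by exact Hg; tauto.
Qed.

Lemma clip_scale g w : 0 < g -> g * clip 0 1 (w / g) = clip 0 g w.
Proof.
  intros Hg. assert (Ew : w = g * (w / g)) by (field; lra).
  set (z := w / g) in *. rewrite Ew. unfold clip, Rmin, Rmax.
  repeat destruct Rle_dec; nra.
Qed.

Lemma clip_translate u v m g : 0 < g -> u <= v ->
  clip 0 1 ((v - m) / g) - clip 0 1 ((u - m) / g) = (clip u v (m + g) - clip u v m) / g.
Proof.
  intros Hg Huv. apply Rmult_eq_reg_l with g; [|lra].
  rewrite Rmult_minus_distr_l, !clip_scale by auto.
  unfold clip, Rmin, Rmax. field_simplify; [|lra].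
  repeat destruct Rle_dec; lra.
Qed.

Definition row_bump (f : pt -> R) (n u v c : R) : Prop :=
  u <= v /\ forall t, t <> u -> t <> v -> f (t, n) = bump u v c t.

Lemma bond_integral f n u v c g m : 0 < g -> row_bump f n u v c ->
  { pr : Riemann_integrable (fun l => f (m + l * g, n)) 0 1 |
    RiemannInt pr = c * (clip u v (m + g) - clip u v m) / g }.
Proof.
  intros Hg [Huv Hrow].
  destruct (RiemannInt_bump (fun l => f (m + l * g, n)) ((u - m) / g) ((v - m) / g) c)
    as [pr E].
  - unfold Rdiv. apply Rmult_le_compat_r; [left; apply Rinv_0_lt_compat|]; lra.
  - intros l Hu Hv.
    assert (El : l = (m + l * g - m) / g) by (field; lra).
    rewrite Hrow, (bump_shift_scale u v c m g), <- El by
      (exact Hg || (intro E; (apply Hu + apply Hv); rewrite El, E; reflexivity)).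
    reflexivity.
  - exists pr. rewrite E, clip_translate by auto. field. lra.
Qed.

Fixpoint sum_nat (F : nat -> R) (k : nat) : R :=
  match k with O => 0 | S k => sum_nat F k + F k end.

Definition sum_Z (F : Z -> R) (lo : Z) (k : nat) : R :=
  sum_nat (fun j => F (lo + Z.of_nat j)%Z) k.

Lemma sum_nat_ext F F' k : (forall j, (j < k)%nat -> F j = F' j) -> sum_nat F k = sum_nat F' k.
Proof.
  induction k as [|k IH]; intros H; simpl; [reflexivity|].
  rewrite IH by (intros; apply H; lia). rewrite H by lia. reflexivity.
Qed.

Lemma sum_nat_plus F F' k : sum_nat (fun j => F j + F' j) k = sum_nat F k + sum_nat F' k.
Proof. induction k; simpl; lra. Qed.

Lemma sum_nat_const x k : sum_nat (fun _ => x) k = INR k * x.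
Proof. induction k as [|k IH]; simpl sum_nat; [simpl; lra|]. rewrite IH, S_INR. lra. Qed.

Lemma sum_nat_succ_sub F k : sum_nat (fun j => F (S j)) k - sum_nat F k = F k - F O.
Proof. induction k; simpl; lra. Qed.

Lemma sum_Z_telescope F Phi lo k : (forall n, F n = Phi (n + 1)%Z - Phi n) ->
  sum_Z F lo k = Phi (lo + Z.of_nat k)%Z - Phi lo.
Proof.
  intros H. unfold sum_Z. induction k as [|k IH]; simpl.
  - replace (lo + 0)%Z with lo by lia. lra.
  - rewrite IH, H. replace (lo + Z.of_nat k + 1)%Z with (lo + Z.pos (Pos.of_succ_nat k))%Z
      by lia. lra.
Qed.

Lemma clip_low u v s : u <= v -> s <= u -> clip u v s = u.
Proof. intros. unfold clip, Rmin, Rmax. repeat destruct Rle_dec; lra. Qed.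

Lemma clip_high u v s : u <= v -> v <= s -> clip u v s = v.
Proof. intros. unfold clip, Rmin, Rmax. repeat destruct Rle_dec; lra. Qed.

(* [clip (m + G) - clip m] is a sum of [G] unit increments, so the sum over [m] telescopes. *)
Lemma sum_clip_increments u v c (G : nat) lo k : (0 < G)%nat -> u <= v ->
  IZR lo + INR G <= u -> v <= IZR (lo + Z.of_nat k) ->
  sum_Z (fun m => c * (clip u v (IZR m + INR G) - clip u v (IZR m)) / INR G) lo k
  = c * (v - u).
Proof.
  intros HG Huv Hlo Hhi.
  assert (Hg : 0 < INR G) by (apply lt_0_INR; auto).
  set (W := fun s : Z => sum_nat (fun j => clip u v (IZR s + INR j)) G).
  rewrite (sum_Z_telescope _ (fun s => c * W s / INR G)).
  - unfold W.
    rewrite (sum_nat_ext _ (fun _ => v)), (sum_nat_ext (fun j => clip u v _) (fun _ => u)).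
    + rewrite !sum_nat_const. field. lra.
    + intros j Hj. apply clip_low; auto. apply lt_INR in Hj. lra.
    + intros j Hj. apply clip_high; auto. pose proof (pos_INR j). lra.
  - intros m. unfold W. rewrite plus_IZR.
    pose proof (sum_nat_succ_sub (fun j => clip u v (IZR m + INR j)) G) as E.
    cbv beta in E. change (INR 0) with 0 in E. rewrite Rplus_0_r in E.
    rewrite (sum_nat_ext (fun j => clip u v (IZR m + 1 + INR j))
                         (fun j => clip u v (IZR m + INR (S j)))).
    + rewrite <- E. field. lra.
    + intros j _. rewrite S_INR. f_equal. ring.
Qed.

Definition row_bond (f : pt -> R) (G : nat) (m n : Z) : R -> R :=
  fun l => f (IZR m + l * INR G, IZR n).

Section RowBonds.
Variables (f : pt -> R) (n : Z) (u v c : R) (G : nat).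
Hypothesis Hrow : row_bump f (IZR n) u v c.
Hypothesis HG : (0 < G)%nat.

Lemma row_bond_integrable m : inhabited (Riemann_integrable (row_bond f G m n) 0 1).
Proof.
  destruct (bond_integral f (IZR n) u v c (INR G) (IZR m)) as [pr _]; auto.
  apply lt_0_INR; auto.
Qed.

Lemma row_bond_average m :
  average01 (row_bond f G m n) = c * (clip u v (IZR m + INR G) - clip u v (IZR m)) / INR G.
Proof.
  destruct (bond_integral f (IZR n) u v c (INR G) (IZR m)) as [pr E]; auto.
  - apply lt_0_INR; auto.
  - exact (eq_trans (average01_RiemannInt _ pr) E).
Qed.

Lemma row_bond_average_zero m :
  c * (v - u) = 0 \/ IZR m + INR G <= u \/ v <= IZR m -> average01 (row_bond f G m n) = 0.
Proof.
  intros H. rewrite row_bond_average. destruct Hrow as [Huv _].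
  assert (Hg : 0 < INR G) by (apply lt_0_INR; auto).
  destruct H as [H|[H|H]].
  - apply Rmult_integral in H. destruct H as [->|H]; [field; lra|].
    assert (v = u) as -> by lra. unfold clip.
    rewrite !(Rmin_right _ u) by (apply Rmax_r). field. lra.
  - rewrite !clip_low by (auto; lra). field. lra.
  - rewrite !clip_high by (auto; lra). field. lra.
Qed.

Lemma row_bond_sum lo k :
  c * (v - u) = 0 \/ (IZR lo + INR G <= u /\ v <= IZR (lo + Z.of_nat k)) ->
  sum_Z (fun m => average01 (row_bond f G m n)) lo k = c * (v - u).
Proof.
  intros [H|[H1 H2]].
  - rewrite H. unfold sum_Z. rewrite (sum_nat_ext _ (fun _ => 0)), sum_nat_const; [ring|].
    intros j _. apply row_bond_average_zero. auto.
  - rewrite <- (sum_clip_increments u v c G lo k); auto; [|apply Hrow].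
    unfold sum_Z. apply sum_nat_ext. intros j _. apply row_bond_average.
Qed.

End RowBonds.

Lemma decP_true (P : Prop) : P -> decP P = true.
Proof. intros H; unfold decP; destruct excluded_middle_informative; tauto. Qed.

Lemma decP_false (P : Prop) : ~ P -> decP P = false.
Proof. intros H; unfold decP; destruct excluded_middle_informative; tauto. Qed.

Definition chi_bary (la lb lc : R) : R :=
  if decP (0 < la /\ 0 < lb /\ 0 < lc) then 1
  else if decP (0 <= la /\ 0 <= lb /\ 0 <= lc) then 1 / 2 else 0.

Lemma chi_bary_swap12 la lb lc : chi_bary lb la lc = chi_bary la lb lc.
Proof. unfold chi_bary, decP; repeat destruct excluded_middle_informative; tauto. Qed.

Lemma chi_bary_swap23 la lb lc : chi_bary la lc lb = chi_bary la lb lc.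
Proof. unfold chi_bary, decP; repeat destruct excluded_middle_informative; tauto. Qed.

Definition tri_det (A B C : pt) : R := det2 (psub B A) (psub C A).

(* The vertex values of [chi_tri] play no role in bond integrals. *)
Definition chi_off_vertices (A B C : pt) (f : pt -> R) : Prop :=
  forall X, X <> A -> X <> B -> X <> C ->
    f X = chi_bary (bary_a A B C X) (bary_b A B C X) (bary_c A B C X).

Lemma chi_tri_off_vertices A B C : chi_off_vertices A B C (chi_tri A B C).
Proof. intros X Ha Hb Hc. unfold chi_tri. rewrite !decP_false by auto. reflexivity. Qed.

Definition lerp (m : R) (P Q : pt) : pt :=
  ((1 - m) * fst P + m * fst Q, (1 - m) * snd P + m * snd Q).

Ltac destruct_pts := repeat match goal with p : pt |- _ => destruct p end.
Ltac unfold_bary :=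
  unfold bary_a, bary_b, bary_c, tri_det, lerp, det2, psub in *; simpl in *.

Lemma tri_det_swap12 A B C : tri_det B A C = - tri_det A B C.
Proof. destruct_pts. unfold_bary. ring. Qed.

Lemma tri_det_swap23 A B C : tri_det A C B = - tri_det A B C.
Proof. destruct_pts. unfold_bary. ring. Qed.

Lemma bary_lerp A B C (HD : tri_det A B C <> 0) m X Y :
  bary_a A B C (lerp m X Y) = (1 - m) * bary_a A B C X + m * bary_a A B C Y /\
  bary_b A B C (lerp m X Y) = (1 - m) * bary_b A B C X + m * bary_b A B C Y /\
  bary_c A B C (lerp m X Y) = (1 - m) * bary_c A B C X + m * bary_c A B C Y.
Proof. destruct_pts. unfold_bary. (split; [|split]); field; auto. Qed.

Lemma bary_combination A B C (HD : tri_det A B C <> 0) X :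
  bary_a A B C X + bary_b A B C X + bary_c A B C X = 1 /\
  bary_a A B C X * fst A + bary_b A B C X * fst B + bary_c A B C X * fst C = fst X /\
  bary_a A B C X * snd A + bary_b A B C X * snd B + bary_c A B C X * snd C = snd X.
Proof. destruct_pts. unfold_bary. (split; [|split]); field; auto. Qed.

Lemma bary_vertex_A A B C (HD : tri_det A B C <> 0) :
  bary_a A B C A = 1 /\ bary_b A B C A = 0 /\ bary_c A B C A = 0.
Proof. destruct_pts. unfold_bary. (split; [|split]); field; auto. Qed.

Lemma bary_vertex_B A B C (HD : tri_det A B C <> 0) :
  bary_a A B C B = 0 /\ bary_b A B C B = 1 /\ bary_c A B C B = 0.
Proof. destruct_pts. unfold_bary. (split; [|split]); field; auto. Qed.

Lemma bary_vertex_C A B C (HD : tri_det A B C <> 0) :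
  bary_a A B C C = 0 /\ bary_b A B C C = 0 /\ bary_c A B C C = 1.
Proof. destruct_pts. unfold_bary. (split; [|split]); field; auto. Qed.

Section Barycentric.
Variables A B C : pt.
Hypothesis HD : tri_det A B C <> 0.

Lemma bary_lerp_AB m :
  bary_a A B C (lerp m A B) = 1 - m /\ bary_b A B C (lerp m A B) = m /\
  bary_c A B C (lerp m A B) = 0.
Proof.
  destruct (bary_lerp A B C HD m A B) as (->&->&->).
  destruct (bary_vertex_A A B C HD) as (->&->&->), (bary_vertex_B A B C HD) as (->&->&->).
  split; [|split]; ring.
Qed.

Lemma bary_lerp_AC m :
  bary_a A B C (lerp m A C) = 1 - m /\ bary_b A B C (lerp m A C) = 0 /\
  bary_c A B C (lerp m A C) = m.
Proof.
  destruct (bary_lerp A B C HD m A C) as (->&->&->).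
  destruct (bary_vertex_A A B C HD) as (->&->&->), (bary_vertex_C A B C HD) as (->&->&->).
  split; [|split]; ring.
Qed.

Lemma bary_not_vertex X :
  (0 < bary_a A B C X /\ 0 < bary_b A B C X) \/ (0 < bary_a A B C X /\ 0 < bary_c A B C X) \/
  (0 < bary_b A B C X /\ 0 < bary_c A B C X) \/
  bary_a A B C X < 0 \/ bary_b A B C X < 0 \/ bary_c A B C X < 0 ->
  X <> A /\ X <> B /\ X <> C.
Proof.
  intros H. destruct (bary_vertex_A A B C HD) as (?&?&?), (bary_vertex_B A B C HD) as (?&?&?),
    (bary_vertex_C A B C HD) as (?&?&?).
  split; [|split]; intros ->; lra.
Qed.

Variable f : pt -> R.
Hypothesis Hf : chi_off_vertices A B C f.

Lemma chi_off_vertices_interior X :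
  0 < bary_a A B C X -> 0 < bary_b A B C X -> 0 < bary_c A B C X -> f X = 1.
Proof.
  intros H1 H2 H3. destruct (bary_not_vertex X) as (?&?&?); [tauto|].
  rewrite Hf by auto. unfold chi_bary. rewrite decP_true by auto. reflexivity.
Qed.

Lemma chi_off_vertices_edge_AB X :
  0 < bary_a A B C X -> 0 < bary_b A B C X -> bary_c A B C X = 0 -> f X = 1 / 2.
Proof.
  intros H1 H2 H3. destruct (bary_not_vertex X) as (?&?&?); [tauto|].
  rewrite Hf by auto. unfold chi_bary. rewrite decP_false, decP_true by lra. reflexivity.
Qed.

Lemma chi_off_vertices_exterior X :
  bary_a A B C X < 0 \/ bary_b A B C X < 0 \/ bary_c A B C X < 0 -> f X = 0.
Proof.
  intros H. destruct (bary_not_vertex X) as (?&?&?); [tauto|].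
  rewrite Hf by auto. unfold chi_bary. rewrite !decP_false by lra. reflexivity.
Qed.

End Barycentric.

Lemma tri_det_rotate A B C : tri_det B C A = tri_det A B C.
Proof. destruct_pts. unfold_bary. ring. Qed.

Lemma tri_det_reverse A B C : tri_det C B A = - tri_det A B C.
Proof. destruct_pts. unfold_bary. ring. Qed.

Lemma chi_off_vertices_swap12 A B C f : tri_det A B C <> 0 ->
  chi_off_vertices A B C f -> chi_off_vertices B A C f.
Proof.
  intros HD H X H1 H2 H3. rewrite H, <- chi_bary_swap12 by auto.
  f_equal; destruct_pts; unfold_bary; field; split; auto; intro; apply HD; lra.
Qed.

Lemma chi_off_vertices_swap23 A B C f : tri_det A B C <> 0 ->
  chi_off_vertices A B C f -> chi_off_vertices A C B f.
Proof.
  intros HD H X H1 H2 H3. rewrite H, <- chi_bary_swap23 by auto.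
  f_equal; destruct_pts; unfold_bary; field; split; auto; intro; apply HD; lra.
Qed.

Lemma chi_off_vertices_rotate A B C f : tri_det A B C <> 0 ->
  chi_off_vertices A B C f -> chi_off_vertices B C A f.
Proof.
  intros HD H. apply chi_off_vertices_swap23; [rewrite tri_det_swap12; lra|].
  apply chi_off_vertices_swap12; auto.
Qed.

Lemma chi_off_vertices_reverse A B C f : tri_det A B C <> 0 ->
  chi_off_vertices A B C f -> chi_off_vertices C B A f.
Proof.
  intros HD H. apply chi_off_vertices_swap23; [rewrite tri_det_rotate, tri_det_rotate; auto|].
  apply chi_off_vertices_rotate; [rewrite tri_det_rotate; auto|].
  apply chi_off_vertices_rotate; auto.
Qed.

Lemma Rmax_minus_Rmin a b : Rmax a b - Rmin a b = Rabs (a - b).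
Proof. unfold Rmax, Rmin, Rabs; destruct Rle_dec, Rcase_abs; lra. Qed.

Lemma Rabs_le_bounds x y : Rabs x <= y -> -y <= x <= y.
Proof. unfold Rabs; destruct Rcase_abs; lra. Qed.

Lemma lerp_fst_bound Bd m P Q : 0 <= m <= 1 -> Rabs (fst P) <= Bd -> Rabs (fst Q) <= Bd ->
  -Bd <= fst (lerp m P Q) <= Bd.
Proof.
  unfold lerp, Rabs; simpl; intros Hm HP HQ.
  destruct (Rcase_abs (fst P)), (Rcase_abs (fst Q)); split; nra.
Qed.

Lemma row_bump_single f n p : (forall t, t <> p -> f (t, n) = 0) -> row_bump f n p p 0.
Proof.
  intros H. split; [lra|]. intros t Ht _. rewrite H by auto.
  unfold bump. repeat destruct Rlt_dec; lra.
Qed.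

Lemma row_bump_lerp f X1 X2 c : fst X1 <> fst X2 -> snd X1 = snd X2 ->
  (forall th, 0 < th < 1 -> f (lerp th X1 X2) = c) ->
  (forall th, th < 0 \/ 1 < th -> f (lerp th X1 X2) = 0) ->
  row_bump f (snd X1) (Rmin (fst X1) (fst X2)) (Rmax (fst X1) (fst X2)) c.
Proof.
  destruct X1 as [x1 n], X2 as [x2 n']; simpl. intros Hx <- Hin Hout.
  split; [apply Rminmax|]. intros t Hu Hv.
  set (th := (t - x1) / (x2 - x1)).
  assert (E : (t, n) = lerp th (x1, n) (x2, n)) by (unfold lerp, th; simpl; f_equal; field; lra).
  assert (Ht : t = x1 + th * (x2 - x1)) by (unfold th; field; lra).
  rewrite E. unfold bump, Rmin, Rmax in *.
  destruct (Rle_dec x1 x2).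
  - destruct (Rlt_dec x1 t), (Rlt_dec t x2); first [apply Hin | apply Hout | exfalso]; nra.
  - destruct (Rlt_dec x2 t), (Rlt_dec t x1); first [apply Hin | apply Hout | exfalso]; nra.
Qed.

Section Chords.
Variables (A B C : pt) (f : pt -> R) (Bd : R).
Hypothesis HD : tri_det A B C <> 0.
Hypothesis Hf : chi_off_vertices A B C f.
Hypotheses (HA : Rabs (fst A) <= Bd) (HB : Rabs (fst B) <= Bd) (HC : Rabs (fst C) <= Bd).

(* The row at height [n] meets [AB] and [AC] at these parameters; it may pass through [B]. *)
Lemma chord_row n :
  0 < (n - snd A) / (snd B - snd A) <= 1 -> 0 < (n - snd A) / (snd C - snd A) < 1 ->
  exists u v, row_bump f n u v 1 /\
    v - u = Rabs ((n - snd A) * tri_det A B C / ((snd B - snd A) * (snd C - snd A))) /\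
    -Bd <= u /\ v <= Bd.
Proof.
  set (m1 := (n - snd A) / (snd B - snd A)). set (m2 := (n - snd A) / (snd C - snd A)).
  intros Hm1 Hm2.
  (* Since [/ 0 = 0], a positive ratio has a nonzero denominator. *)
  assert (HyB : snd B - snd A <> 0).
  { intro E. unfold m1, Rdiv in Hm1. rewrite E, Rinv_0 in Hm1. lra. }
  assert (HyC : snd C - snd A <> 0).
  { intro E. unfold m2, Rdiv in Hm2. rewrite E, Rinv_0 in Hm2. lra. }
  set (X1 := lerp m1 A B). set (X2 := lerp m2 A C).
  destruct (bary_lerp_AB A B C HD m1) as (E1&E2&E3).
  destruct (bary_lerp_AC A B C HD m2) as (E4&E5&E6).
  fold X1 in E1, E2, E3. fold X2 in E4, E5, E6.
  assert (Hn1 : snd X1 = n) by (unfold X1, lerp, m1; simpl; field; auto).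
  assert (Hn2 : snd X2 = n) by (unfold X2, lerp, m2; simpl; field; auto).
  assert (Hx : fst X1 <> fst X2).
  { intro E. assert (X1 = X2) as Heq
      by (rewrite (surjective_pairing X1), (surjective_pairing X2), E, Hn1, Hn2; auto).
    rewrite Heq in E2. lra. }
  exists (Rmin (fst X1) (fst X2)), (Rmax (fst X1) (fst X2)). split; [|split].
  - rewrite <- Hn1. apply row_bump_lerp; auto; [congruence| |];
      intros th Hth; destruct (bary_lerp A B C HD th X1 X2) as (Ea&Eb&Ec).
    + apply (chi_off_vertices_interior A B C HD f Hf); rewrite ?Ea, ?Eb, ?Ec; nra.
    + apply (chi_off_vertices_exterior A B C HD f Hf). rewrite Eb, Ec. nra.
  - rewrite Rmax_minus_Rmin.
    unfold X1, X2, lerp, m1, m2, tri_det, det2, psub; simpl. f_equal. field. auto.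
  - pose proof (lerp_fst_bound Bd m1 A B). pose proof (lerp_fst_bound Bd m2 A C).
    unfold Rmin, Rmax, X1, X2 in *; destruct Rle_dec; split; lra.
Qed.

Lemma edge_row : snd A = snd B ->
  exists u v, row_bump f (snd A) u v (1 / 2) /\ v - u = Rabs (fst A - fst B) /\
    -Bd <= u /\ v <= Bd.
Proof.
  intros Hy.
  assert (Hx : fst A <> fst B).
  { intro E. apply HD. unfold tri_det, det2, psub; simpl. rewrite E, Hy. ring. }
  exists (Rmin (fst A) (fst B)), (Rmax (fst A) (fst B)). split; [|split].
  - apply row_bump_lerp; auto;
      intros th Hth; destruct (bary_lerp A B C HD th A B) as (Ea&Eb&Ec);
      destruct (bary_vertex_A A B C HD) as (E1&E2&E3);
      destruct (bary_vertex_B A B C HD) as (E4&E5&E6).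
    + apply (chi_off_vertices_edge_AB A B C HD f Hf); rewrite ?Ea, ?Eb, ?Ec; nra.
    + apply (chi_off_vertices_exterior A B C HD f Hf). rewrite Ea, Eb. nra.
  - apply Rmax_minus_Rmin.
  - apply Rabs_le_bounds in HA. apply Rabs_le_bounds in HB.
    unfold Rmin, Rmax; destruct Rle_dec; split; lra.
Qed.

End Chords.

Lemma Rdiv_in_unit a b : 0 < a -> a <= b -> 0 < a / b <= 1.
Proof.
  intros Ha Hab. split; [apply Rdiv_lt_0_compat; lra|].
  apply Rmult_le_reg_r with b; [lra|]. unfold Rdiv. rewrite Rmult_assoc, Rinv_l; lra.
Qed.

Lemma Rdiv_in_open_unit a b : 0 < a -> a < b -> 0 < a / b < 1.
Proof.
  intros Ha Hab. split; [apply Rdiv_lt_0_compat; lra|].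
  apply Rmult_lt_reg_r with b; [lra|]. unfold Rdiv. rewrite Rmult_assoc, Rinv_l; lra.
Qed.

Lemma Rabs_scaled s d p q : 0 <= s -> 0 < p -> 0 < q ->
  Rabs (s * d / (p * q)) = s * Rabs d / (p * q).
Proof.
  intros Hs Hp Hq. unfold Rdiv.
  rewrite !Rabs_mult, Rabs_inv, Rabs_mult, (Rabs_pos_eq s), (Rabs_pos_eq p), (Rabs_pos_eq q)
    by lra.
  reflexivity.
Qed.

Lemma neg_or_nonneg3 la lb lc :
  la < 0 \/ lb < 0 \/ lc < 0 \/ (0 <= la /\ 0 <= lb /\ 0 <= lc).
Proof. destruct (Rlt_or_le la 0), (Rlt_or_le lb 0), (Rlt_or_le lc 0); tauto. Qed.

(* Weighted length of the intersection of the triangle with the row at height [n],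
   for vertices sorted by height; a row containing an edge counts half. *)
Definition row_length (A B C : pt) (n : R) : R :=
  let D := Rabs (tri_det A B C) in
  let ya := snd A in let yb := snd B in let yc := snd C in
  if Rlt_dec n ya then 0 else if Rlt_dec yc n then 0 else
  if Req_EM_T n ya then (if Req_EM_T ya yb then D / (yc - ya) / 2 else 0) else
  if Req_EM_T n yc then (if Req_EM_T yb yc then D / (yc - ya) / 2 else 0) else
  if Rlt_dec n yb then D * (n - ya) / ((yb - ya) * (yc - ya))
  else D * (yc - n) / ((yc - yb) * (yc - ya)).

Lemma row_length_outside A B C n : n < snd A \/ snd C < n -> row_length A B C n = 0.
Proof.
  intros Hn. unfold row_length.
  destruct (Rlt_dec n (snd A)); auto. destruct (Rlt_dec (snd C) n); auto. lra.
Qed.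

Section SortedTriangle.
Variables (A B C : pt) (f : pt -> R) (Bd : R).
Hypothesis HD : tri_det A B C <> 0.
Hypothesis Hf : chi_off_vertices A B C f.
Hypotheses (HA : Rabs (fst A) <= Bd) (HB : Rabs (fst B) <= Bd) (HC : Rabs (fst C) <= Bd).
Hypotheses (Hab : snd A <= snd B) (Hbc : snd B <= snd C).

Lemma sorted_height_lt : snd A < snd C.
Proof.
  destruct (Req_dec (snd A) (snd C)) as [E|E]; [|lra]. exfalso. apply HD.
  assert (snd B = snd A) by lra. unfold tri_det, det2, psub; simpl. rewrite H, E. ring.
Qed.

Lemma below_row_vanishes X :
  snd X < snd A \/ (snd X = snd A /\ snd A < snd B /\ X <> A) -> f X = 0.
Proof.
  intros HX. apply (chi_off_vertices_exterior A B C HD f Hf).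
  destruct (bary_combination A B C HD X) as (S&Fx&Fy).
  destruct (neg_or_nonneg3 (bary_a A B C X) (bary_b A B C X) (bary_c A B C X))
    as [H|[H|[H|(Pa&Pb&Pc)]]]; auto. exfalso.
  destruct HX as [HX|(HX&HAB&HXA)]; [nra|].
  assert (bary_b A B C X = 0) by nra. assert (bary_c A B C X = 0) by nra.
  apply HXA. destruct X, A. simpl in *. f_equal; nra.
Qed.

Lemma above_row_vanishes X :
  snd C < snd X \/ (snd X = snd C /\ snd B < snd C /\ X <> C) -> f X = 0.
Proof.
  intros HX. apply (chi_off_vertices_exterior A B C HD f Hf).
  destruct (bary_combination A B C HD X) as (S&Fx&Fy).
  destruct (neg_or_nonneg3 (bary_a A B C X) (bary_b A B C X) (bary_c A B C X))
    as [H|[H|[H|(Pa&Pb&Pc)]]]; auto. exfalso.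
  destruct HX as [HX|(HX&HBC&HXC)]; [nra|].
  pose proof sorted_height_lt.
  assert (E : bary_a A B C X * (snd C - snd A) + bary_b A B C X * (snd C - snd B) = 0) by nra.
  assert (bary_a A B C X * (snd C - snd A) >= 0) by nra.
  assert (bary_b A B C X * (snd C - snd B) >= 0) by nra.
  assert (Ea : bary_a A B C X = 0) by nra. assert (Eb : bary_b A B C X = 0) by nra.
  assert (Ec : bary_c A B C X = 1) by lra. rewrite Ea, Eb, Ec in Fx, Fy.
  apply HXC. destruct X, C. simpl in *. f_equal; lra.
Qed.

Lemma bottom_row : exists u v c, row_bump f (snd A) u v c /\
  c * (v - u) = (if Req_EM_T (snd A) (snd B) then Rabs (tri_det A B C) / (snd C - snd A) / 2
                 else 0) /\ -Bd <= u /\ v <= Bd.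
Proof.
  pose proof sorted_height_lt as Hac. pose proof (Rabs_le_bounds _ _ HA).
  destruct (Req_EM_T (snd A) (snd B)) as [E|E].
  - destruct (edge_row A B C f Bd HD Hf HA HB E) as (u&v&Hr&Hl&Hu&Hv).
    exists u, v, (1 / 2). split; [exact Hr|split; [|lra]].
    unfold tri_det, det2, psub; simpl. rewrite Hl, <- E, Rminus_diag, Rmult_0_l, Rminus_0_r,
      Rabs_mult, (Rabs_pos_eq (snd C - snd A)), <- Rabs_Ropp by lra.
    field_simplify; [|lra]. f_equal. f_equal. ring.
  - exists (fst A), (fst A), 0. split; [|split; [ring|lra]].
    apply row_bump_single. intros t Ht. apply below_row_vanishes. right.
    repeat split; [lra|]. intro Et; apply Ht; rewrite <- Et; reflexivity.
Qed.

Lemma top_row : exists u v c, row_bump f (snd C) u v c /\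
  c * (v - u) = (if Req_EM_T (snd B) (snd C) then Rabs (tri_det A B C) / (snd C - snd A) / 2
                 else 0) /\ -Bd <= u /\ v <= Bd.
Proof.
  pose proof sorted_height_lt as Hac. pose proof (Rabs_le_bounds _ _ HC).
  destruct (Req_EM_T (snd B) (snd C)) as [E|E].
  - destruct (edge_row B C A f Bd) as (u&v&Hr&Hl&Hu&Hv); auto.
    + rewrite tri_det_rotate; auto.
    + apply chi_off_vertices_rotate; auto.
    + rewrite E in Hr. exists u, v, (1 / 2). split; [exact Hr|split; [|lra]].
      unfold tri_det, det2, psub; simpl. rewrite Hl, E.
      replace ((fst B - fst A) * (snd C - snd A) - (snd C - snd A) * (fst C - fst A))
        with ((fst B - fst C) * (snd C - snd A)) by ring.
      rewrite Rabs_mult, (Rabs_pos_eq (snd C - snd A)) by lra. field. lra.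
  - exists (fst C), (fst C), 0. split; [|split; [ring|lra]].
    apply row_bump_single. intros t Ht. apply above_row_vanishes. right.
    repeat split; [lra|]. intro Et; apply Ht; rewrite <- Et; reflexivity.
Qed.

Lemma interior_row n : snd A < n < snd C -> exists u v, row_bump f n u v 1 /\
  v - u = (if Rlt_dec n (snd B)
           then Rabs (tri_det A B C) * (n - snd A) / ((snd B - snd A) * (snd C - snd A))
           else Rabs (tri_det A B C) * (snd C - n) / ((snd C - snd B) * (snd C - snd A))) /\
  -Bd <= u /\ v <= Bd.
Proof.
  intros Hn. destruct (Rlt_dec n (snd B)) as [L|L].
  - destruct (chord_row A B C f Bd HD Hf HA HB HC n) as (u&v&Hr&Hl&Hu&Hv).
    + apply Rdiv_in_unit; lra.
    + apply Rdiv_in_open_unit; lra.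
    + exists u, v. split; [exact Hr|split; [|lra]].
      rewrite Hl, Rabs_scaled by lra. field. lra.
  - assert (HD' : tri_det C B A <> 0) by (rewrite tri_det_reverse; lra).
    destruct (chord_row C B A f Bd HD' (chi_off_vertices_reverse A B C f HD Hf) HC HB HA n)
      as (u&v&Hr&Hl&Hu&Hv).
    + replace ((n - snd C) / (snd B - snd C)) with ((snd C - n) / (snd C - snd B))
        by (field; lra). apply Rdiv_in_unit; lra.
    + replace ((n - snd C) / (snd A - snd C)) with ((snd C - n) / (snd C - snd A))
        by (field; lra). apply Rdiv_in_open_unit; lra.
    + exists u, v. split; [exact Hr|split; [|lra]].
      rewrite Hl, tri_det_reverse.
      replace ((n - snd C) * - tri_det A B C / ((snd B - snd C) * (snd A - snd C)))
        with ((snd C - n) * tri_det A B C / ((snd C - snd B) * (snd C - snd A)))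
        by (field; lra).
      rewrite Rabs_scaled by lra. field. lra.
Qed.

Lemma row_decomposition n : exists u v c,
  row_bump f n u v c /\ c * (v - u) = row_length A B C n /\ -Bd <= u /\ v <= Bd.
Proof.
  pose proof (Rabs_le_bounds _ _ HA). pose proof (Rabs_le_bounds _ _ HC).
  unfold row_length.
  destruct (Rlt_dec n (snd A)) as [L1|L1].
  { exists (fst A), (fst A), 0. split; [|split; [ring|lra]].
    apply row_bump_single. intros t _. apply below_row_vanishes. auto. }
  destruct (Rlt_dec (snd C) n) as [L2|L2].
  { exists (fst C), (fst C), 0. split; [|split; [ring|lra]].
    apply row_bump_single. intros t _. apply above_row_vanishes. auto. }
  destruct (Req_EM_T n (snd A)) as [->|E1]; [apply bottom_row|].
  destruct (Req_EM_T n (snd C)) as [->|E3]; [apply top_row|].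
  destruct (interior_row n) as (u&v&Hr&Hl&Hu&Hv); [lra|].
  exists u, v, 1. rewrite Rmult_1_l. auto.
Qed.

End SortedTriangle.

(* The trapezoid-rule sample at [n] of the affine function [x |-> al + be x] on [[p, q]]. *)
Definition trapezoid_weight (p q : Z) (al be : R) (n : Z) : R :=
  if orb (n <? p)%Z (q <? n)%Z then 0
  else if orb (n =? p)%Z (n =? q)%Z then (al + be * IZR n) / 2 else al + be * IZR n.

Definition trapezoid_partial (p q : Z) (al be : R) (n : Z) : R :=
  let L x := al + be * x in
  if (n <=? p)%Z then 0
  else if (n <=? q)%Z then (IZR n - IZR p) * (L (IZR p) + L (IZR n)) / 2 - L (IZR n) / 2
  else (IZR q - IZR p) * (L (IZR p) + L (IZR q)) / 2.

Lemma trapezoid_weight_telescope p q al be n : (p < q)%Z ->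
  trapezoid_weight p q al be n =
  trapezoid_partial p q al be (n + 1) - trapezoid_partial p q al be n.
Proof.
  intros Hpq. unfold trapezoid_weight, trapezoid_partial.
  destruct (Z.ltb_spec n p), (Z.ltb_spec q n); simpl;
  destruct (Z.eqb_spec n p), (Z.eqb_spec n q); simpl;
  destruct (Z.leb_spec (n + 1) p), (Z.leb_spec n p),
    (Z.leb_spec (n + 1) q), (Z.leb_spec n q);
  try (exfalso; lia); rewrite ?plus_IZR;
  try (subst; field);
  try (assert (n = q - 1)%Z as -> by lia; rewrite minus_IZR; field);
  field.
Qed.

Lemma trapezoid_sum p q al be lo k : (p < q)%Z -> (lo <= p)%Z -> (q < lo + Z.of_nat k)%Z ->
  sum_Z (trapezoid_weight p q al be) lo k =
  (IZR q - IZR p) * ((al + be * IZR p) + (al + be * IZR q)) / 2.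
Proof.
  intros H1 H2 H3.
  rewrite (sum_Z_telescope _ (trapezoid_partial p q al be))
    by (intros; apply trapezoid_weight_telescope; auto).
  unfold trapezoid_partial. destruct (Z.leb_spec (lo + Z.of_nat k) p); [lia|].
  destruct (Z.leb_spec (lo + Z.of_nat k) q); [lia|].
  destruct (Z.leb_spec lo p); [lra|lia].
Qed.

Lemma sum_Z_ext F F' lo k : (forall n, F n = F' n) -> sum_Z F lo k = sum_Z F' lo k.
Proof. intros H. unfold sum_Z. apply sum_nat_ext. auto. Qed.

Lemma sum_Z_plus F F' lo k : sum_Z (fun n => F n + F' n) lo k = sum_Z F lo k + sum_Z F' lo k.
Proof. apply sum_nat_plus. Qed.

Lemma sum_Z_zero lo k : sum_Z (fun _ => 0) lo k = 0.
Proof. unfold sum_Z. rewrite sum_nat_const. ring. Qed.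

Ltac IZR_to_Z := repeat match goal with
  | H : IZR _ < IZR _ |- _ => apply lt_IZR in H
  | H : ~ (IZR _ < IZR _) |- _ => apply Rnot_lt_le, le_IZR in H
  | H : IZR _ = IZR _ |- _ => apply eq_IZR in H
  | H : IZR ?x <> IZR ?y |- _ => assert (x <> y)%Z by (intro; subst; auto); clear H
  end.

Ltac Z_cases := repeat match goal with
  | |- context [(?x <? ?y)%Z] => destruct (Z.ltb_spec x y); try (exfalso; lia)
  | |- context [(?x =? ?y)%Z] => destruct (Z.eqb_spec x y); try (exfalso; lia)
  end; simpl.

Section IntegerHeights.
Variables (A B C : pt) (a0 b0 c0 : Z).
Hypotheses (HyA : snd A = IZR a0) (HyB : snd B = IZR b0) (HyC : snd C = IZR c0).
Hypotheses (Hab : (a0 <= b0)%Z) (Hbc : (b0 <= c0)%Z) (Hac : (a0 < c0)%Z).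

Let h := Rabs (tri_det A B C) / (IZR c0 - IZR a0).

(* [row_length] rises linearly from [0] to [h] on [[a0, b0]] and falls back on [[b0, c0]]. *)
Definition lower_tent n : R := if (a0 =? b0)%Z then 0 else
  trapezoid_weight a0 b0 (- h * IZR a0 / (IZR b0 - IZR a0)) (h / (IZR b0 - IZR a0)) n.

Definition upper_tent n : R := if (b0 =? c0)%Z then 0 else
  trapezoid_weight b0 c0 (h * IZR c0 / (IZR c0 - IZR b0)) (- h / (IZR c0 - IZR b0)) n.

Lemma IZR_sub_neq0 x y : x <> y -> IZR x - IZR y <> 0.
Proof. intros H E. apply H, eq_IZR, Rminus_diag_uniq, E. Qed.

Lemma row_length_tents n : row_length A B C (IZR n) = lower_tent n + upper_tent n.
Proof.
  assert (Hca : IZR c0 - IZR a0 <> 0) by (apply IZR_sub_neq0; lia).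
  unfold row_length, lower_tent, upper_tent, trapezoid_weight. fold h.
  rewrite HyA, HyB, HyC. unfold h.
  destruct (Rlt_dec (IZR n) (IZR a0)); IZR_to_Z; [Z_cases; lra|].
  destruct (Rlt_dec (IZR c0) (IZR n)); IZR_to_Z; [Z_cases; lra|].
  destruct (Req_EM_T (IZR n) (IZR a0)); IZR_to_Z.
  { subst n. destruct (Req_EM_T (IZR a0) (IZR b0)); IZR_to_Z; Z_cases; try subst;
    try (field; repeat split; auto; apply IZR_sub_neq0; lia). }
  destruct (Req_EM_T (IZR n) (IZR c0)); IZR_to_Z.
  { subst n. destruct (Req_EM_T (IZR b0) (IZR c0)); IZR_to_Z; Z_cases; try subst;
    try (field; repeat split; auto; apply IZR_sub_neq0; lia). }
  destruct (Rlt_dec (IZR n) (IZR b0)); IZR_to_Z; Z_cases; try subst;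
    try (field; repeat split; auto; apply IZR_sub_neq0; lia).
Qed.

Lemma sum_row_length lo k : (lo <= a0)%Z -> (c0 < lo + Z.of_nat k)%Z ->
  sum_Z (fun n => row_length A B C (IZR n)) lo k = Rabs (tri_det A B C) / 2.
Proof.
  intros H1 H2.
  rewrite (sum_Z_ext _ (fun n => lower_tent n + upper_tent n)) by apply row_length_tents.
  rewrite sum_Z_plus. unfold lower_tent, upper_tent.
  assert (Hca : IZR c0 - IZR a0 <> 0) by (apply IZR_sub_neq0; lia).
  destruct (Z.eqb_spec a0 b0), (Z.eqb_spec b0 c0); try lia;
    rewrite ?sum_Z_zero, ?trapezoid_sum by lia; subst; unfold h;
    field; repeat split; try apply IZR_sub_neq0; lia.
Qed.

End IntegerHeights.

Definition relabeling (A B C A' B' C' : pt) : Prop :=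
  tri_det A' B' C' <> 0 /\ Rabs (tri_det A' B' C') = Rabs (tri_det A B C) /\
  forall f, chi_off_vertices A B C f -> chi_off_vertices A' B' C' f.

Lemma relabeling_refl A B C : tri_det A B C <> 0 -> relabeling A B C A B C.
Proof. intros HD. split; [|split]; auto. Qed.

Lemma relabeling_swap12 A B C A' B' C' :
  relabeling A B C A' B' C' -> relabeling A B C B' A' C'.
Proof.
  intros (HD&Habs&Hf). unfold relabeling. rewrite tri_det_swap12, Rabs_Ropp.
  split; [lra|split; auto]. intros f H. apply chi_off_vertices_swap12; auto.
Qed.

Lemma relabeling_swap23 A B C A' B' C' :
  relabeling A B C A' B' C' -> relabeling A B C A' C' B'.
Proof.
  intros (HD&Habs&Hf). unfold relabeling. rewrite tri_det_swap23, Rabs_Ropp.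
  split; [lra|split; auto]. intros f H. apply chi_off_vertices_swap23; auto.
Qed.

Lemma sort_vertices_by_height (a b c : Z * Z) : tri_det (ptZ a) (ptZ b) (ptZ c) <> 0 ->
  exists a' b' c', (snd a' <= snd b' <= snd c')%Z /\
    relabeling (ptZ a) (ptZ b) (ptZ c) (ptZ a') (ptZ b') (ptZ c').
Proof.
  intros HD. pose proof (relabeling_refl _ _ _ HD) as R.
  destruct (Z.le_gt_cases (snd a) (snd b)), (Z.le_gt_cases (snd b) (snd c)),
    (Z.le_gt_cases (snd a) (snd c)); try lia.
  - exists a, b, c. auto.
  - exists a, c, b. split; [lia|]. apply relabeling_swap23; auto.
  - exists c, a, b. split; [lia|]. apply relabeling_swap12, relabeling_swap23; auto.
  - exists b, a, c. split; [lia|]. apply relabeling_swap12; auto.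
  - exists b, c, a. split; [lia|]. apply relabeling_swap23, relabeling_swap12; auto.
  - exists c, b, a. split; [lia|].
    apply relabeling_swap12, relabeling_swap23, relabeling_swap12; auto.
Qed.

Definition in_range (lo : Z) (k : nat) (x : Z) : Prop := (lo <= x < lo + Z.of_nat k)%Z.

Definition horizontal_bond_sums (f : pt -> R) (G : nat) (S : R) : Prop :=
  exists lo k,
    (forall m n, inhabited (Riemann_integrable (row_bond f G m n) 0 1)) /\
    (forall m n, ~ (in_range lo k m /\ in_range lo k n) -> average01 (row_bond f G m n) = 0) /\
    sum_Z (fun n => sum_Z (fun m => average01 (row_bond f G m n)) lo k) lo k = S.

Lemma horizontal_bonds_sorted (a b c : Z * Z) f G :
  tri_det (ptZ a) (ptZ b) (ptZ c) <> 0 -> chi_off_vertices (ptZ a) (ptZ b) (ptZ c) f ->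
  (0 < G)%nat -> (snd a <= snd b <= snd c)%Z ->
  horizontal_bond_sums f G (Rabs (tri_det (ptZ a) (ptZ b) (ptZ c)) / 2).
Proof.
  intros HD Hf HG Hy.
  set (Bd := (Z.abs (fst a) + Z.abs (fst b) + Z.abs (fst c) +
              Z.abs (snd a) + Z.abs (snd b) + Z.abs (snd c))%Z).
  assert (Hbd : forall z, (Z.abs z <= Bd)%Z -> Rabs (IZR z) <= IZR Bd)
    by (intros z Hz; rewrite <- abs_IZR; apply IZR_le; auto).
  assert (Hrow : forall n : Z, exists u v c0, row_bump f (IZR n) u v c0 /\
    c0 * (v - u) = row_length (ptZ a) (ptZ b) (ptZ c) (IZR n) /\ - IZR Bd <= u /\ v <= IZR Bd)
    by (intros n; apply row_decomposition; auto;
        try (apply Hbd; unfold Bd; lia); simpl; apply IZR_le; lia).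
  assert (HGz : INR G = IZR (Z.of_nat G)) by apply INR_IZR_INZ.
  (* Bonds starting left of [-Bd - G] or right of [Bd] miss the triangle. *)
  set (lo := (- (Bd + Z.of_nat G))%Z). set (k := Z.to_nat (2 * (Bd + Z.of_nat G) + 1)).
  assert (Hk : Z.of_nat k = (2 * (Bd + Z.of_nat G) + 1)%Z) by (unfold k; rewrite Z2Nat.id; lia).
  assert (Hlo : forall m, (m <= lo)%Z -> IZR m + INR G <= - IZR Bd)
    by (intros; rewrite HGz, <- plus_IZR, <- opp_IZR; apply IZR_le; unfold lo in *; lia).
  assert (Hhi : forall m, (lo + Z.of_nat k <= m)%Z -> IZR Bd <= IZR m)
    by (intros; apply IZR_le; unfold lo in *; lia).
  exists lo, k. split; [|split].
  - intros m n. destruct (Hrow n) as (u&v&c0&Hr&_). apply (row_bond_integrable f n u v c0); auto.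
  - intros m n Hmn. destruct (Hrow n) as (u&v&c0&Hr&Hl&Hu&Hv).
    apply (row_bond_average_zero f n u v c0); auto.
    destruct (Z_lt_le_dec n (snd a)), (Z_lt_le_dec (snd c) n);
      try (left; rewrite Hl; apply row_length_outside; simpl;
           ((left; apply IZR_lt; lia) || (right; apply IZR_lt; lia))).
    right. unfold in_range in Hmn.
    destruct (Z_lt_le_dec m lo) as [Hm|Hm]; [left|right].
    + apply Rle_trans with (- IZR Bd); auto. apply Hlo. lia.
    + apply Rle_trans with (IZR Bd); auto. apply Hhi. unfold lo in *; lia.
  - rewrite (sum_Z_ext _ (fun n => row_length (ptZ a) (ptZ b) (ptZ c) (IZR n))).
    + pose proof (sorted_height_lt (ptZ a) (ptZ b) (ptZ c) HD) as Hac. simpl in Hac.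
      apply (sum_row_length _ _ _ (snd a) (snd b) (snd c)); auto;
        try (apply lt_IZR, Hac; apply IZR_le; lia); unfold lo, Bd in *; lia.
    + intros n. destruct (Hrow n) as (u&v&c0&Hr&Hl&Hu&Hv). rewrite <- Hl.
      apply (row_bond_sum f n u v c0 G); auto. right. split.
      * apply Rle_trans with (- IZR Bd); auto. apply Hlo. lia.
      * apply Rle_trans with (IZR Bd); auto. apply Hhi. lia.
Qed.

Lemma horizontal_bonds (a b c : Z * Z) f G :
  tri_det (ptZ a) (ptZ b) (ptZ c) <> 0 -> chi_off_vertices (ptZ a) (ptZ b) (ptZ c) f ->
  (0 < G)%nat -> horizontal_bond_sums f G (Rabs (tri_det (ptZ a) (ptZ b) (ptZ c)) / 2).
Proof.
  intros HD Hf HG.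
  destruct (sort_vertices_by_height a b c HD) as (a'&b'&c'&Hy&HD'&Habs&Hf').
  rewrite <- Habs. apply horizontal_bonds_sorted; auto.
Qed.

Lemma sum_list_app t l1 l2 : sum_list t (l1 ++ l2) = sum_list t l1 + sum_list t l2.
Proof. induction l1; simpl; lra. Qed.

Lemma sum_list_perm t l1 l2 : Permutation l1 l2 -> sum_list t l1 = sum_list t l2.
Proof. induction 1; simpl; lra. Qed.

Lemma sum_list_map_fold {A} t (h : A -> Z * Z) l :
  sum_list t (map h l) = fold_right (fun x s => t (h x) + s) 0 l.
Proof. induction l; simpl; auto. rewrite IHl. auto. Qed.

Definition zlist (lo : Z) (k : nat) : list Z := map (fun j => (lo + Z.of_nat j)%Z) (seq 0 k).

Definition box (lo : Z) (k : nat) : list (Z * Z) :=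
  flat_map (fun n => map (fun m => (m, n)) (zlist lo k)) (zlist lo k).

Lemma in_zlist lo k x : In x (zlist lo k) <-> in_range lo k x.
Proof.
  unfold zlist, in_range. rewrite in_map_iff. split.
  - intros (j & <- & Hj). apply in_seq in Hj. lia.
  - intros H. exists (Z.to_nat (x - lo)). split; [lia|]. apply in_seq. lia.
Qed.

Lemma in_box lo k m n : In (m, n) (box lo k) <-> in_range lo k m /\ in_range lo k n.
Proof.
  unfold box. rewrite in_flat_map. split.
  - intros (n' & H1 & H2). apply in_map_iff in H2. destruct H2 as (m' & E & H3).
    inversion E; subst. rewrite in_zlist in *. auto.
  - intros (H1 & H2). exists n. split; [apply in_zlist; auto|].
    apply in_map_iff. exists m. split; auto. apply in_zlist; auto.
Qed.

Lemma NoDup_zlist lo k : NoDup (zlist lo k).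
Proof. apply FinFun.Injective_map_NoDup; [intros x y E; lia | apply seq_NoDup]. Qed.

Lemma NoDup_rows (L l0 : list Z) : NoDup L -> NoDup l0 ->
  NoDup (flat_map (fun n => map (fun m => (m, n)) l0) L).
Proof.
  intros HL H0. induction HL as [|n l Hn Hl IH]; simpl; [constructor|].
  apply NoDup_app; auto.
  - apply FinFun.Injective_map_NoDup; auto. intros x y E; inversion E; auto.
  - intros x H1 H2. apply in_map_iff in H1. destruct H1 as (m & <- & _).
    apply in_flat_map in H2. destruct H2 as (n' & Hn' & H2). apply in_map_iff in H2.
    destruct H2 as (m' & E & _). inversion E; subst. auto.
Qed.

Lemma NoDup_box lo k : NoDup (box lo k).
Proof. apply NoDup_rows; apply NoDup_zlist. Qed.

Lemma fold_zlist (F : Z -> R) lo k :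
  fold_right (fun x s => F x + s) 0 (zlist lo k) = sum_Z F lo k.
Proof.
  unfold zlist, sum_Z. induction k as [|k IH]; [reflexivity|].
  rewrite seq_S, map_app, fold_right_app. simpl. rewrite <- IH. clear IH.
  generalize (F (lo + Z.of_nat k)%Z). intro x.
  induction (map (fun j : nat => (lo + Z.of_nat j)%Z) (seq 0 k)); simpl; lra.
Qed.

Lemma sum_list_rows t (L l0 : list Z) :
  sum_list t (flat_map (fun n => map (fun m => (m, n)) l0) L) =
  fold_right (fun n s => fold_right (fun m s => t (m, n) + s) 0 l0 + s) 0 L.
Proof.
  induction L as [|n l IH]; simpl; auto.
  rewrite sum_list_app, IH, sum_list_map_fold. reflexivity.
Qed.

Lemma sum_box t lo k :
  sum_list t (box lo k) = sum_Z (fun n => sum_Z (fun m => t (m, n)) lo k) lo k.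
Proof.
  unfold box. rewrite sum_list_rows, <- fold_zlist. f_equal.
  apply functional_extensionality. intros n. apply functional_extensionality. intros s.
  rewrite fold_zlist. reflexivity.
Qed.

Lemma sum_list_support t F0 F : NoDup F0 -> NoDup F -> incl F0 F ->
  (forall x, ~ In x F0 -> t x = 0) -> sum_list t F = sum_list t F0.
Proof.
  intros N0 N I Z0.
  assert (dec : forall x y : Z * Z, {x = y} + {x <> y}) by (decide equality; apply Z.eq_dec).
  set (inF0 := fun x => if in_dec dec x F0 then true else false).
  assert (Hs : forall l, sum_list t l = sum_list t (filter inF0 l)).
  { induction l as [|x l IH]; simpl; auto. unfold inF0 at 1.
    destruct in_dec; simpl; rewrite IH; auto. rewrite Z0 by auto. lra. }
  rewrite Hs. apply sum_list_perm, NoDup_Permutation; auto using NoDup_filter.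
  intros x. rewrite filter_In. unfold inF0.
  destruct in_dec; split; [tauto | auto | intros [_ E]; discriminate | tauto].
Qed.

Lemma sumZ2_finite_support t F0 : NoDup F0 -> (forall i, ~ In i F0 -> t i = 0) ->
  sumZ2 t (sum_list t F0).
Proof.
  intros N0 Z0 eps Heps. exists F0. intros F N I.
  rewrite (sum_list_support t F0 F), Rminus_diag, Rabs_R0; auto.
Qed.

Lemma sumZ2_reindex_box t s (M N : Z * Z -> Z * Z) lo k :
  (forall i, N (M i) = i) -> (forall j, M (N j) = j) -> (forall i, t i = s (M i)) ->
  (forall m n, ~ (in_range lo k m /\ in_range lo k n) -> s (m, n) = 0) ->
  sumZ2 t (sum_Z (fun n => sum_Z (fun m => s (m, n)) lo k) lo k).
Proof.
  intros NM MN Hts Hs.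
  assert (E : sum_list t (map N (box lo k)) = sum_list s (box lo k)).
  { induction (box lo k); simpl; auto. rewrite IHl, Hts, MN. reflexivity. }
  rewrite <- sum_box, <- E. apply sumZ2_finite_support.
  - apply FinFun.Injective_map_NoDup; [|apply NoDup_box].
    intros x y Exy. rewrite <- (MN x), <- (MN y), Exy. reflexivity.
  - intros i Hi. rewrite Hts. destruct (M i) as [m n] eqn:Em. apply Hs.
    intros Hin. apply Hi, in_map_iff. exists (M i). rewrite NM, Em. split; auto.
    apply in_box. auto.
Qed.

Lemma primitive_decomposition (r1 r2 : Z) : (r1, r2) <> (0%Z, 0%Z) ->
  exists g u v p q, (0 < g)%Z /\ r1 = (g * p)%Z /\ r2 = (g * q)%Z /\ (u * p + v * q = 1)%Z.
Proof.
  intros Hr. set (g := Z.gcd r1 r2).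
  assert (Hg : (0 < g)%Z).
  { pose proof (Z.gcd_nonneg r1 r2). destruct (Z.eq_dec g 0) as [E|E]; [|unfold g in *; lia].
    apply Z.gcd_eq_0 in E. destruct E; subst; tauto. }
  destruct (Z.gcd_divide_l r1 r2) as [p Hp], (Z.gcd_divide_r r1 r2) as [q Hq].
  destruct (Zis_gcd_bezout r1 r2 g (Zgcd_is_gcd r1 r2)) as [u v Huv].
  exists g, u, v, p, q. fold g in Hp, Hq. split; [|split; [lia|split; [lia|]]]; auto.
  rewrite Hp, Hq in Huv. apply (Z.mul_cancel_l _ _ g); lia.
Qed.

(* With [u p + v q = 1], the matrix [[u, v], [-q, p]] lies in SL(2, Z) and maps
   [(p, q)] to [(1, 0)]; [lat_inv] and [lin_inv] are its inverse on Z^2 and R^2. *)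
Definition lat_map (u v p q : Z) (i : Z * Z) : Z * Z :=
  ((u * fst i + v * snd i)%Z, (- q * fst i + p * snd i)%Z).

Definition lat_inv (u v p q : Z) (j : Z * Z) : Z * Z :=
  ((p * fst j - v * snd j)%Z, (q * fst j + u * snd j)%Z).

Definition lin_inv (u v p q : Z) (X : pt) : pt :=
  (IZR p * fst X - IZR v * snd X, IZR q * fst X + IZR u * snd X).

Section Unimodular.
Variables u v p q : Z.
Hypothesis Hdet : (u * p + v * q = 1)%Z.

Lemma lat_inv_map i : lat_inv u v p q (lat_map u v p q i) = i.
Proof.
  destruct i as [x y]. unfold lat_inv, lat_map; simpl. f_equal.
  - transitivity ((u * p + v * q) * x)%Z; [ring|rewrite Hdet; ring].
  - transitivity ((u * p + v * q) * y)%Z; [ring|rewrite Hdet; ring].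
Qed.

Lemma lat_map_inv j : lat_map u v p q (lat_inv u v p q j) = j.
Proof.
  destruct j as [x y]. unfold lat_inv, lat_map; simpl. f_equal.
  - transitivity ((u * p + v * q) * x)%Z; [ring|rewrite Hdet; ring].
  - transitivity ((u * p + v * q) * y)%Z; [ring|rewrite Hdet; ring].
Qed.

Lemma ptZ_lat_inv j : ptZ (lat_inv u v p q j) = lin_inv u v p q (ptZ j).
Proof.
  destruct j as [x y]. unfold lat_inv, lin_inv, ptZ; simpl.
  rewrite minus_IZR, plus_IZR, !mult_IZR. reflexivity.
Qed.

Lemma IZR_det : IZR u * IZR p + IZR v * IZR q = 1.
Proof. rewrite <- !mult_IZR, <- plus_IZR, Hdet. reflexivity. Qed.

Lemma lin_inv_injective X Y : lin_inv u v p q X = lin_inv u v p q Y -> X = Y.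
Proof.
  pose proof IZR_det as D. destruct X as [x1 x2], Y as [y1 y2]. unfold lin_inv; simpl.
  intros E. injection E as E1 E2.
  assert (Hx : (IZR u * IZR p + IZR v * IZR q) * (x1 - y1) =
    IZR u * ((IZR p * x1 - IZR v * x2) - (IZR p * y1 - IZR v * y2)) +
    IZR v * ((IZR q * x1 + IZR u * x2) - (IZR q * y1 + IZR u * y2))) by ring.
  assert (Hy : (IZR u * IZR p + IZR v * IZR q) * (x2 - y2) =
    IZR p * ((IZR q * x1 + IZR u * x2) - (IZR q * y1 + IZR u * y2)) -
    IZR q * ((IZR p * x1 - IZR v * x2) - (IZR p * y1 - IZR v * y2))) by ring.
  rewrite E1, E2, D in Hx, Hy. f_equal; lra.
Qed.

Lemma det2_lin_inv P Q R S :
  det2 (psub (lin_inv u v p q P) (lin_inv u v p q Q)) (psub (lin_inv u v p q R) (lin_inv u v p q S))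
  = det2 (psub P Q) (psub R S).
Proof.
  rewrite <- (Rmult_1_l (det2 (psub P Q) (psub R S))), <- IZR_det.
  unfold det2, psub, lin_inv; simpl. ring.
Qed.

Lemma chi_off_vertices_lin_inv A B C f :
  chi_off_vertices (lin_inv u v p q A) (lin_inv u v p q B) (lin_inv u v p q C) f ->
  chi_off_vertices A B C (fun X => f (lin_inv u v p q X)).
Proof.
  intros H X HA HB HC.
  rewrite H by (intro E; apply lin_inv_injective in E; auto).
  unfold bary_a, bary_b, bary_c. rewrite !det2_lin_inv. reflexivity.
Qed.

Lemma bond_param_lat_map f g i : (0 < g)%Z ->
  bond_param (ptZ i) (ptZ (fst i + g * p, snd i + g * q)%Z) f =
  row_bond (fun X => f (lin_inv u v p q X)) (Z.to_nat g)
    (fst (lat_map u v p q i)) (snd (lat_map u v p q i)).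
Proof.
  intros Hg. pose proof IZR_det as E. apply functional_extensionality. intros l.
  destruct i as [x y]. unfold bond_param, row_bond, lin_inv, lat_map, ptZ; simpl.
  rewrite INR_IZR_INZ, Z2Nat.id by lia. f_equal. f_equal; rewrite ?plus_IZR, ?mult_IZR, ?opp_IZR.
  - apply Rminus_diag_uniq.
    transitivity ((1 - (IZR u * IZR p + IZR v * IZR q)) * IZR x); [ring|rewrite E; ring].
  - apply Rminus_diag_uniq.
    transitivity ((1 - (IZR u * IZR p + IZR v * IZR q)) * IZR y); [ring|rewrite E; ring].
Qed.

End Unimodular.

Theorem lemma4p4 (a b c : Z * Z) (r : Z * Z) :
  nondegenerate (ptZ a) (ptZ b) (ptZ c) ->
  r <> (0%Z, 0%Z) ->
  (forall i : Z * Z,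
     inhabited (Riemann_integrable
       (bond_param (ptZ i) (ptZ (fst i + fst r, snd i + snd r)%Z)
          (chi_tri (ptZ a) (ptZ b) (ptZ c))) 0 1)) /\
  sumZ2 (fun i => bond_avg (chi_tri (ptZ a) (ptZ b) (ptZ c))
                    (ptZ i) (ptZ (fst i + fst r, snd i + snd r)%Z))
        (tri_area (ptZ a) (ptZ b) (ptZ c)).
Proof.
  intros Hnd Hr. destruct r as [r1 r2]. simpl.
  destruct (primitive_decomposition r1 r2 Hr) as (g&u&v&p&q&Hg&->&->&Hdet).
  set (M := lat_map u v p q).
  set (f := fun X => chi_tri (ptZ a) (ptZ b) (ptZ c) (lin_inv u v p q X)).
  assert (Hpt : forall i, ptZ i = lin_inv u v p q (ptZ (M i)))
    by (intros; rewrite <- ptZ_lat_inv, lat_inv_map; auto).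
  assert (HD : tri_det (ptZ (M a)) (ptZ (M b)) (ptZ (M c)) = tri_det (ptZ a) (ptZ b) (ptZ c))
    by (rewrite (Hpt a), (Hpt b), (Hpt c); symmetry; apply det2_lin_inv; auto).
  destruct (horizontal_bonds (M a) (M b) (M c) f (Z.to_nat g)) as (lo&k&Hint&Hzero&Hsum).
  - rewrite HD. exact Hnd.
  - apply chi_off_vertices_lin_inv; auto. rewrite <- !Hpt. apply chi_tri_off_vertices.
  - lia.
  - split.
    + intros i. rewrite (bond_param_lat_map u v p q Hdet) by auto. apply Hint.
    + unfold tri_area. fold (tri_det (ptZ a) (ptZ b) (ptZ c)). rewrite <- HD, <- Hsum.
      apply (sumZ2_reindex_box _ (fun j => average01 (row_bond f (Z.to_nat g) (fst j) (snd j)))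
        M (lat_inv u v p q)); auto; intros i; [apply lat_inv_map | apply lat_map_inv|]; auto.
      rewrite bond_avg_average01, (bond_param_lat_map u v p q Hdet) by auto. reflexivity.
Qed.
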